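(* $SL_3(\mathfrak{o})$ is the disjoint union $\Delta_2\sqcup\Delta_{1,0}\sqcup\Delta_{1,1}$, where $$\Delta_2=\bigsqcup_{y\in Y(\mathfrak{o})}\bigsqcup_{d\in D(3)}\bigsqcup_{u\in U(3)}\varphi_2(y^{-1})du\Gamma_\infty(3),\quad \Delta_{1,0}=\bigsqcup_{\substack{y_1,y_2\in Y(\mathfrak{o})\\ y_2\neq I_2}}\bigsqcup_{d\in D(3)}\bigsqcup_{u\in U(3)}\varphi_2(y_1^{-1})\varphi_1(y_2^{-1})du\Gamma_\infty(3),$$ $$\Delta_{1,1}=\bigsqcup_{\substack{y_1,y_2,y_3\in Y(\mathfrak{o})\\ y_2,y_3\neq I_2}}\bigsqcup_{d\in D(3)}\bigsqcup_{u\in U(3)}\varphi_2(y_1^{-1})\varphi_1(y_2^{-1})\varphi_2(y_3^{-1})du\Gamma_\infty(3).$$ In particular, all the sets appearing on the right-hand sides are pairwise disjoint and their union is $SL_3(\mathfrak{o})$.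
   Context: Let $\omega=e^{2\pi i/3}$, $\mathfrak{o}=\mathbb{Z}[\omega]$, $\mathfrak{o}^\times$ its unit group. Fix representatives of nonzero elements modulo units (''$c\in(\mathfrak{o}-\{0\})/\mathfrak{o}^\times$'') and, for each nonzero $c$, representatives of $\mathfrak{o}/c\mathfrak{o}$ (''$a\in\mathfrak{o}/c\mathfrak{o}$''). $Y(\mathfrak{o})=\{\begin{pmatrix}a&b\\c&d\end{pmatrix}\in SL_2(\mathfrak{o}) : c\in(\mathfrak{o}-\{0\})/\mathfrak{o}^\times,\ a\in\mathfrak{o}/c\mathfrak{o}\}\cup\{I_2\}$. $\Gamma(3)=\{A\in SL_3(\mathfrak{o}):A\equiv I_3\pmod{3\mathfrak{o}}\}$ (entrywise), $\Gamma_\infty(3)$ its subgroup of upper triangular unipotent matrices. $D(3)$: diagonal $\mathrm{diag}(i,j,k)$ with $i,j,k\in\mathfrak{o}$, $ijk=1$. $U(3)$: matrices $\begin{pmatrix}1&\alpha&\beta\\&1&\gamma\\&&1\end{pmatrix}$ with $\alpha,\beta,\gamma\in\{0,1,2\}+\{0,1,2\}\omega$. For $y=\begin{pmatrix}a&b\\c&d\end{pmatrix}\in SL_2(\mathfrak{o})$, $\varphi_1(y)=\begin{pmatrix}a&b&0\\c&d&0\\0&0&1\end{pmatrix}$, $\varphi_2(y)=\begin{pmatrix}1&0&0\\0&a&b\\0&c&d\end{pmatrix}$. For $A=(a_{ij})\in SL_3(\mathfrak{o})$: $\Delta_2=\{A: a_{21}=a_{31}=0\}$, $\Delta_{1,0}=\{A:(a_{21}\neq0\text{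 or }a_{31}\neq0)\text{ and }a_{21}a_{32}-a_{22}a_{31}=0\}$, $\Delta_{1,1}=\{A: a_{21}a_{32}-a_{22}a_{31}\neq0\}$. *)

(* The Eisenstein integers o = Z[omega] are realised as a
   subset of the algebraic complex numbers algC. *)
From HB Require Import structures.
From mathcomp Require Import all_boot all_order all_algebra all_field.
Set Implicit Arguments. Unset Strict Implicit. Unset Printing Implicit Defensive.
Import Order.TTheory GRing.Theory Num.Theory.
Local Open Scope ring_scope.

(* omega = e^{2 pi i / 3} = (-1 + i sqrt 3)/2 *)
Definition omega : algC := (-1 + 'i * sqrtC 3) / 2.

Definition Eis (x : algC) : Prop :=
  exists a b : int, x = a%:~R + b%:~R * omega.

Definition Eis_unit (x : algC) : Prop :=
  Eis x /\ exists y, Eis y /\ x * y = 1.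

Definition Eis_assoc (x y : algC) : Prop :=
  exists e, Eis_unit e /\ x = e * y.

Definition Eis_congr (c x y : algC) : Prop :=
  exists t, Eis t /\ x - y = c * t.

Definition reps_units (R : algC -> Prop) : Prop :=
  (forall r, R r -> Eis r /\ r <> 0) /\
  (forall x, Eis x -> x <> 0 -> exists! r, R r /\ Eis_assoc x r).

Definition reps_mod (c : algC) (A : algC -> Prop) : Prop :=
  (forall r, A r -> Eis r) /\
  (forall x, Eis x -> exists! r, A r /\ Eis_congr c x r).

Definition SL_o (n : nat) (A : 'M[algC]_n) : Prop :=
  (forall i j, Eis (A i j)) /\ \det A = 1.

Definition o2_0 : 'I_2 := @Ordinal 2 0 isT.
Definition o2_1 : 'I_2 := @Ordinal 2 1 isT.
Definition o3_0 : 'I_3 := @Ordinal 3 0 isT.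
Definition o3_1 : 'I_3 := @Ordinal 3 1 isT.
Definition o3_2 : 'I_3 := @Ordinal 3 2 isT.

(* Y(o) relative to the chosen representatives Rc (of c) and Ra c (of a mod c) *)
Definition Yset (Rc : algC -> Prop) (Ra : algC -> algC -> Prop)
  (y : 'M[algC]_2) : Prop :=
  (SL_o y /\ Rc (y o2_1 o2_0) /\ Ra (y o2_1 o2_0) (y o2_0 o2_0)) \/ y = 1%:M.

Definition Gamma3 (A : 'M[algC]_3) : Prop :=
  SL_o A /\ forall i j, Eis_congr 3 (A i j) ((1%:M : 'M[algC]_3) i j).

Definition GammaInf3 (A : 'M[algC]_3) : Prop :=
  Gamma3 A /\ (forall i j : 'I_3, (j < i)%N -> A i j = 0) /\
  (forall i, A i i = 1).

Definition D3 (d : 'M[algC]_3) : Prop :=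
  (forall i j, i != j -> d i j = 0) /\ (forall i, Eis (d i i)) /\
  d o3_0 o3_0 * d o3_1 o3_1 * d o3_2 o3_2 = 1.

Definition S3 (x : algC) : Prop :=
  exists a b : nat, (a < 3)%N /\ (b < 3)%N /\ x = a%:R + b%:R * omega.

Definition U3 (u : 'M[algC]_3) : Prop :=
  (forall i, u i i = 1) /\ (forall i j : 'I_3, (j < i)%N -> u i j = 0) /\
  S3 (u o3_0 o3_1) /\ S3 (u o3_0 o3_2) /\ S3 (u o3_1 o3_2).

Definition phi1 (y : 'M[algC]_2) : 'M[algC]_3 :=
  \matrix_(i < 3, j < 3)
    if ((i < 2)%N && (j < 2)%N) then y (inord i) (inord j) else (i == j)%:R.
Definition phi2 (y : 'M[algC]_2) : 'M[algC]_3 :=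
  \matrix_(i < 3, j < 3)
    if ((0 < i)%N && (0 < j)%N) then y (inord i.-1) (inord j.-1)
    else (i == j)%:R.

Definition in_coset (g A : 'M[algC]_3) : Prop :=
  exists gam, GammaInf3 gam /\ A = g *m gam.

(* Delta_2, Delta_{1,0}, Delta_{1,1} (subsets of SL_3(o)); entries a_{21} etc.
   are A o3_1 o3_0 etc. (0-based indices) *)
Definition Delta2 (A : 'M[algC]_3) : Prop :=
  SL_o A /\ A o3_1 o3_0 = 0 /\ A o3_2 o3_0 = 0.
Definition Delta10 (A : 'M[algC]_3) : Prop :=
  SL_o A /\ (A o3_1 o3_0 <> 0 \/ A o3_2 o3_0 <> 0) /\
  A o3_1 o3_0 * A o3_2 o3_1 - A o3_1 o3_1 * A o3_2 o3_0 = 0.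
Definition Delta11 (A : 'M[algC]_3) : Prop :=
  SL_o A /\ A o3_1 o3_0 * A o3_2 o3_1 - A o3_1 o3_1 * A o3_2 o3_0 <> 0.

(* index set of all the cosets appearing in the three disjoint unions *)
Inductive cidx : Type :=
| Ix2 of 'M[algC]_2 & 'M[algC]_3 & 'M[algC]_3
| Ix10 of 'M[algC]_2 & 'M[algC]_2 & 'M[algC]_3 & 'M[algC]_3
| Ix11 of 'M[algC]_2 & 'M[algC]_2 & 'M[algC]_2 & 'M[algC]_3 & 'M[algC]_3.

Definition cidx_valid (Rc : algC -> Prop) (Ra : algC -> algC -> Prop)
  (k : cidx) : Prop :=
  match k with
  | Ix2 y d u => Yset Rc Ra y /\ D3 d /\ U3 u
  | Ix10 y1 y2 d u =>
      Yset Rc Ra y1 /\ Yset Rc Ra y2 /\ y2 <> 1%:M /\ D3 d /\ U3 u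
  | Ix11 y1 y2 y3 d u =>
      Yset Rc Ra y1 /\ Yset Rc Ra y2 /\ Yset Rc Ra y3 /\
      y2 <> 1%:M /\ y3 <> 1%:M /\ D3 d /\ U3 u
  end.

Definition cidx_lead (k : cidx) : 'M[algC]_3 :=
  match k with
  | Ix2 y d u => phi2 (invmx y) *m d *m u
  | Ix10 y1 y2 d u => phi2 (invmx y1) *m phi1 (invmx y2) *m d *m u
  | Ix11 y1 y2 y3 d u =>
      phi2 (invmx y1) *m phi1 (invmx y2) *m phi2 (invmx y3) *m d *m u
  end.

From HB Require Import structures.
From mathcomp Require Import all_boot all_order all_algebra all_field.
From mathcomp Require Import zify ring.
Import Order.TTheory GRing.Theory Num.Theory.
Local Open Scope ring_scope.

(* Row reduction over the Euclidean ring o = Z[omega].  Y(o) contains exactly one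
   matrix for each primitive row (c, d) up to units, so for any x1, x2 in o some
   y in Y(o) has a bottom row orthogonal to (x1, x2), and left multiplication by
   phi_2(y) or phi_1(y) clears one entry.  Clearing a_31, then a_21, then a_32
   makes A upper triangular; which steps are nontrivial is decided by the first
   column and the minor a_21 a_32 - a_22 a_31, which right multiplication by an
   upper triangular matrix only rescales.  An upper triangular element of SL_3(o)
   is uniquely d u g with d in D(3), u in U(3), g in Gamma_infty(3) (reduce the
   unipotent part mod 3).  Two representatives of one coset differ on the right
   by an upper triangular matrix: comparing first columns, and then the (3,2)
   entry of phi_2(y' y^-1), makes the bottom rows of the y's proportional, which
   forces the y's to be equal. *)

(* Lets [ring] prove identities that only hold modulo a relation [p = 0]. *)
Lemma eq_sub_mul0 (k : algC) {p x y : algC} : p = 0 -> x - y = k * p -> x = y.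
Proof. by move=> ->; rewrite mulr0; apply: subr0_eq. Qed.

Lemma eq_sub_mul0_2 (k1 k2 : algC) {p1 p2 x y : algC} :
  p1 = 0 -> p2 = 0 -> x - y = k1 * p1 + k2 * p2 -> x = y.
Proof. by move=> -> ->; rewrite !mulr0 addr0; apply: subr0_eq. Qed.

(** * Explicit 2x2 and 3x3 matrices *)

Definition mx2 (a00 a01 a10 a11 : algC) : 'M[algC]_2 :=
  \matrix_(i < 2, j < 2) nth 0 (nth [::] [:: [:: a00; a01]; [:: a10; a11]] i) j.

Definition mx3 (a00 a01 a02 a10 a11 a12 a20 a21 a22 : algC) : 'M[algC]_3 :=
  \matrix_(i < 3, j < 3)
    nth 0 (nth [::] [:: [:: a00; a01; a02]; [:: a10; a11; a12]; [:: a20; a21; a22]] i) j.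

Lemma mx2_eta (M : 'M[algC]_2) :
  M = mx2 (M o2_0 o2_0) (M o2_0 o2_1) (M o2_1 o2_0) (M o2_1 o2_1).
Proof.
apply/matrixP => i j; rewrite mxE.
by case: i => [[|[|?]] ?]; case: j => [[|[|?]] ?] //=; congr (M _ _); apply/val_inj.
Qed.

Lemma mx3_eta (M : 'M[algC]_3) :
  M = mx3 (M o3_0 o3_0) (M o3_0 o3_1) (M o3_0 o3_2)
          (M o3_1 o3_0) (M o3_1 o3_1) (M o3_1 o3_2)
          (M o3_2 o3_0) (M o3_2 o3_1) (M o3_2 o3_2).
Proof.
apply/matrixP => i j; rewrite mxE.
by case: i => [[|[|[|?]]] ?]; case: j => [[|[|[|?]]] ?] //=; congr (M _ _); apply/val_inj.
Qed.

Lemma mulmx_mx2 a00 a01 a10 a11 b00 b01 b10 b11 :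
  mx2 a00 a01 a10 a11 *m mx2 b00 b01 b10 b11 =
  mx2 (a00 * b00 + a01 * b10) (a00 * b01 + a01 * b11)
      (a10 * b00 + a11 * b10) (a10 * b01 + a11 * b11).
Proof.
apply/matrixP => i j; rewrite !mxE !big_ord_recl big_ord0 !mxE /= addr0.
by case: i => [[|[|?]] ?]; case: j => [[|[|?]] ?].
Qed.

Lemma mulmx_mx3 a00 a01 a02 a10 a11 a12 a20 a21 a22
                b00 b01 b02 b10 b11 b12 b20 b21 b22 :
  mx3 a00 a01 a02 a10 a11 a12 a20 a21 a22 *m mx3 b00 b01 b02 b10 b11 b12 b20 b21 b22 =
  mx3 (a00 * b00 + a01 * b10 + a02 * b20) (a00 * b01 + a01 * b11 + a02 * b21)
      (a00 * b02 + a01 * b12 + a02 * b22)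
      (a10 * b00 + a11 * b10 + a12 * b20) (a10 * b01 + a11 * b11 + a12 * b21)
      (a10 * b02 + a11 * b12 + a12 * b22)
      (a20 * b00 + a21 * b10 + a22 * b20) (a20 * b01 + a21 * b11 + a22 * b21)
      (a20 * b02 + a21 * b12 + a22 * b22).
Proof.
apply/matrixP => i j; rewrite !mxE !big_ord_recl big_ord0 !mxE /= addr0 ?addrA.
by case: i => [[|[|[|?]]] ?]; case: j => [[|[|[|?]]] ?].
Qed.

Lemma mulmx3E (A B : 'M[algC]_3) i j :
  (A *m B) i j = A i o3_0 * B o3_0 j + A i o3_1 * B o3_1 j + A i o3_2 * B o3_2 j.
Proof.
rewrite mxE !big_ord_recl big_ord0 addr0 addrA.
by congr (_ * _ + _ * _ + _ * _); congr (_ _ _); apply/val_inj.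
Qed.

Lemma mulmx2E (A B : 'M[algC]_2) i j :
  (A *m B) i j = A i o2_0 * B o2_0 j + A i o2_1 * B o2_1 j.
Proof.
rewrite mxE !big_ord_recl big_ord0 addr0.
by congr (_ * _ + _ * _); congr (_ _ _); apply/val_inj.
Qed.

Lemma det_mx2 a00 a01 a10 a11 : \det (mx2 a00 a01 a10 a11) = a00 * a11 - a01 * a10.
Proof.
rewrite (expand_det_row _ ord0) !big_ord_recl big_ord0 /cofactor !det_mx11 !mxE /=.
by rewrite /bump /=; ring.
Qed.

Lemma det_mx3 a00 a01 a02 a10 a11 a12 a20 a21 a22 :
  \det (mx3 a00 a01 a02 a10 a11 a12 a20 a21 a22) =
  a00 * (a11 * a22 - a12 * a21) - a01 * (a10 * a22 - a12 * a20)
  + a02 * (a10 * a21 - a11 * a20).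
Proof.
rewrite (expand_det_row _ ord0) !big_ord_recl big_ord0 /cofactor.
rewrite !(expand_det_row _ ord0) !big_ord_recl big_ord0 /cofactor !det_mx11 !mxE /=.
by rewrite /bump /= !big_ord0; ring.
Qed.

Lemma det2E (y : 'M[algC]_2) :
  \det y = y o2_0 o2_0 * y o2_1 o2_1 - y o2_0 o2_1 * y o2_1 o2_0.
Proof. by rewrite {1}(mx2_eta y) det_mx2. Qed.

Lemma det3E (A : 'M[algC]_3) : \det A =
  A o3_0 o3_0 * (A o3_1 o3_1 * A o3_2 o3_2 - A o3_1 o3_2 * A o3_2 o3_1)
  - A o3_0 o3_1 * (A o3_1 o3_0 * A o3_2 o3_2 - A o3_1 o3_2 * A o3_2 o3_0)
  + A o3_0 o3_2 * (A o3_1 o3_0 * A o3_2 o3_1 - A o3_1 o3_1 * A o3_2 o3_0).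
Proof. by rewrite {1}(mx3_eta A) det_mx3. Qed.

Lemma mx2_1 : (1%:M : 'M[algC]_2) = mx2 1 0 0 1.
Proof. by apply/matrixP => i j; rewrite !mxE; case: i => [[|[|?]] ?]; case: j => [[|[|?]] ?]. Qed.

Lemma mx3_1 : (1%:M : 'M[algC]_3) = mx3 1 0 0 0 1 0 0 0 1.
Proof.
apply/matrixP => i j; rewrite !mxE.
by case: i => [[|[|[|?]]] ?]; case: j => [[|[|[|?]]] ?].
Qed.

Lemma unitmx_det1 {n} {A : 'M[algC]_n} : \det A = 1 -> A \in unitmx.
Proof. by move=> h; rewrite unitmxE h unitr1. Qed.

Lemma invmx_det1 (y : 'M[algC]_2) : \det y = 1 ->
  invmx y = mx2 (y o2_1 o2_1) (- y o2_0 o2_1) (- y o2_1 o2_0) (y o2_0 o2_0).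
Proof.
move=> hdet.
have hinv : mx2 (y o2_1 o2_1) (- y o2_0 o2_1) (- y o2_1 o2_0) (y o2_0 o2_0) *m y = 1%:M.
  rewrite [X in _ *m X = _](mx2_eta y) mulmx_mx2 mx2_1; move: hdet; rewrite det2E => hdet.
  by congr mx2; rewrite -?hdet; ring.
by rewrite -[RHS]mulmx1 -(mulmxV (unitmx_det1 hdet)) mulmxA hinv mul1mx.
Qed.

(** * The Eisenstein integers *)

Lemma omega_root : omega ^+ 2 + omega + 1 = 0.
Proof.
have hi : 'i ^+ 2 = -1 :> algC by rewrite sqrCi.
have hs : sqrtC 3 ^+ 2 = 3 :> algC by rewrite sqrtCK.
rewrite /omega.
have -> : ((-1 + 'i * sqrtC 3) / 2) ^+ 2
          = (1 - 2 * ('i * sqrtC 3) + ('i * sqrtC 3) ^+ 2) / 4 :> algC by field.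
by rewrite exprMn hi hs; field.
Qed.

Lemma Eis0 : Eis 0. Proof. by exists 0, 0; rewrite mul0r addr0. Qed.
Lemma Eis1 : Eis 1. Proof. by exists 1, 0; rewrite mul0r addr0. Qed.
Lemma Eis_nat n : Eis n%:R. Proof. by exists n%:Z, 0; rewrite mul0r addr0. Qed.
Lemma Eis_omega : Eis omega. Proof. by exists 0, 1; rewrite add0r mul1r. Qed.

Lemma EisD {x y} : Eis x -> Eis y -> Eis (x + y).
Proof. by move=> [a [b ->]] [c [d ->]]; exists (a + c), (b + d); rewrite !intrD; ring. Qed.

Lemma EisN {x} : Eis x -> Eis (- x).
Proof. by move=> [a [b ->]]; exists (- a), (- b); rewrite !intrN; ring. Qed.

Lemma EisB {x y} : Eis x -> Eis y -> Eis (x - y).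
Proof. by move=> hx hy; apply: EisD => //; apply: EisN. Qed.

Lemma EisM {x y} : Eis x -> Eis y -> Eis (x * y).
Proof.
move=> [a [b ->]] [c [d ->]]; exists (a * c - b * d), (a * d + b * c - b * d).
by apply: (eq_sub_mul0 (b%:~R * d%:~R) omega_root); rewrite !intrD !intrN !intrM; ring.
Qed.

Create HintDb Eis_closed.
#[local] Hint Resolve Eis0 Eis1 Eis_nat Eis_omega EisD EisB EisN EisM : Eis_closed.
Ltac solve_Eis := solve [auto 12 with Eis_closed].

Definition eis (a b : int) : algC := a%:~R + b%:~R * omega.

Definition eis_norm (a b : int) : int := a * a - a * b + b * b.

(* [-1 - omega] is the complex conjugate of [omega]. *)
Lemma eis_normE a b :
  (eis_norm a b)%:~R = eis a b * (a%:~R + b%:~R * (-1 - omega)) :> algC.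
Proof.
by apply: (eq_sub_mul0 (b%:~R * b%:~R) omega_root); rewrite /eis !intrD !intrN !intrM; ring.
Qed.

Lemma eis_norm_ge0 a b : 0 <= eis_norm a b.
Proof. rewrite /eis_norm; nia. Qed.

Lemma eis_norm_eq0 a b : eis_norm a b = 0 -> a = 0 /\ b = 0.
Proof. rewrite /eis_norm => h; split; nia. Qed.

Lemma eis_eq0 a b : eis a b = 0 -> a = 0 /\ b = 0.
Proof.
move=> h0; apply: eis_norm_eq0; apply/eqP.
by rewrite -(intr_eq0 algC) eis_normE h0 mul0r.
Qed.

Lemma eisM a b c d : eis a b * eis c d = eis (a * c - b * d) (a * d + b * c - b * d).
Proof.
by apply: (eq_sub_mul0 (b%:~R * d%:~R) omega_root); rewrite /eis !intrD !intrN !intrM; ring.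
Qed.

(* The quotient rounds the coordinates of [x * conj y / N(y)] to the nearest
   integers; the remainder then has norm at most [3/4 N(y)]. *)
Lemma eis_divmod (x1 x2 y1 y2 : int) : 0 < eis_norm y1 y2 ->
  exists q1 q2 r1 r2, eis x1 x2 = eis q1 q2 * eis y1 y2 + eis r1 r2 /\
                      eis_norm r1 r2 < eis_norm y1 y2.
Proof.
move=> hN; set N := eis_norm y1 y2.
have round (m : int) : exists q : int, - N <= 2 * (m - q * N) <= N.
  by exists ((2 * m + N) %/ (2 * N))%Z; lia.
set m := x1 * y1 - x1 * y2 + x2 * y2; set n := - x1 * y2 + x2 * y1.
have [q1 hq1] := round m; have [q2 hq2] := round n.
exists q1, q2, (x1 - (q1 * y1 - q2 * y2)), (x2 - (q1 * y2 + q2 * y1 - q2 * y2)).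
split; first by rewrite eisM /eis !intrD !intrN !intrM; ring.
set r1 := x1 - _; set r2 := x2 - _.
have key : eis_norm r1 r2 * N = eis_norm (m - q1 * N) (n - q2 * N).
  by rewrite /r1 /r2 /N /m /n /eis_norm; ring.
set e1 := m - q1 * N in hq1 key; set e2 := n - q2 * N in hq2 key.
have h4 : 4 * eis_norm e1 e2 <= 3 * N * N by rewrite /eis_norm; nia.
have := eis_norm_ge0 r1 r2; nia.
Qed.

Lemma Eis_bezout {x y} : Eis x -> Eis y ->
  exists g x' y' s t, [/\ Eis x', Eis y', Eis s & Eis t] /\
    x = g * x' /\ y = g * y' /\ s * x' + t * y' = 1.
Proof.
move=> [x1 [x2 {x}->]] [y1 [y2 {y}->]]; rewrite -/(eis x1 x2) -/(eis y1 y2).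
elim: (`|eis_norm y1 y2|).+1 {-2}y1 {-2}y2 x1 x2 (ltnSn `|eis_norm y1 y2|) => // k IH.
move=> {}y1 {}y2 x1 x2 hk.
have [/eis_norm_eq0 [-> ->]|hy] := eqVneq (eis_norm y1 y2) 0.
  exists (eis x1 x2), 1, 0, 1, 0; split; first by split; solve_Eis.
  by rewrite /eis; split; [|split]; ring.
have hN : 0 < eis_norm y1 y2 by have := eis_norm_ge0 y1 y2; lia.
have [q1 [q2 [r1 [r2 [hxr hr]]]]] := eis_divmod x1 x2 y1 y2 hN.
have hk' : (`|eis_norm r1 r2| < k)%N by have := eis_norm_ge0 r1 r2; lia.
have [g [x' [y' [s [t [[hx' hy' hs ht] [e1 [e2 e3]]]]]]]] := IH r1 r2 y1 y2 hk'.
have hq : Eis (eis q1 q2) by exists q1, q2.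
exists g, (eis q1 q2 * x' + y'), x', t, (s - t * eis q1 q2); split; first by split; solve_Eis.
split; first by rewrite hxr e1 e2; ring.
by split => //; rewrite -e3; ring.
Qed.

Lemma Eis_assoc_refl x : Eis_assoc x x.
Proof.
exists 1; split; last by rewrite mul1r.
by split; [solve_Eis | exists 1; rewrite mulr1; split=> //; solve_Eis].
Qed.

Lemma Eis_congr_refl c x : Eis_congr c x x.
Proof. by exists 0; split; [solve_Eis | rewrite subrr mulr0]. Qed.

Lemma Eis_congr_sub0 {c x y} : Eis_congr c x y -> Eis_congr c (x - y) 0.
Proof. by rewrite /Eis_congr subr0. Qed.

Lemma Eis_congr_addr {c x x' p p'} : Eis_congr c p 0 -> Eis_congr c p' 0 ->
  x + p = x' + p' -> Eis_congr c x x'.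
Proof.
move=> [t [ht]]; rewrite subr0 => -> [t' [ht']]; rewrite subr0 => -> h.
exists (t' - t); split; first by solve_Eis.
have hp : x + c * t - (x' + c * t') = 0 by rewrite h subrr.
by apply: (eq_sub_mul0 1 hp); ring.
Qed.

Lemma reps_units_eq {R r r'} : reps_units R -> R r -> R r' -> Eis_assoc r r' -> r = r'.
Proof.
move=> [hR huniq] hr hr' hrr'; have [hrE hr0] := hR r hr.
have [r0 [_ h]] := huniq r hrE hr0.
by rewrite -(h r (conj hr (Eis_assoc_refl r))) (h r' (conj hr' hrr')).
Qed.

Lemma reps_mod_eq {c A a a'} : reps_mod c A -> A a -> A a' -> Eis_congr c a a' -> a = a'.
Proof.
move=> [hA huniq] ha ha' haa'.
have [r0 [_ h]] := huniq a (hA a ha).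
by rewrite -(h a (conj ha (Eis_congr_refl c a))) (h a' (conj ha' haa')).
Qed.

Lemma reps_mod_S3 : reps_mod 3 S3.
Proof.
have S3_eq s s' : S3 s -> S3 s' -> Eis_congr 3 s s' -> s = s'.
  move=> [a [b [ha [hb ->]]]] [a' [b' [ha' [hb' ->]]]] [_ [[m [n ->]] h]].
  have [e1 e2] : (a%:Z - a'%:Z - 3 * m = 0) /\ (b%:Z - b'%:Z - 3 * n = 0).
    apply: eis_eq0; rewrite -[RHS](subrr (3 * (m%:~R + n%:~R * omega))) -{1}h.
    by rewrite /eis !intrB !intrM -!pmulrn; ring.
  have -> : a = a' by lia.
  by have -> : b = b' by lia.
split=> [s [a [b [_ [_ ->]]]]|x [m [n ->]]]; first by solve_Eis.
have nat_rem (z : int) : exists k : nat, (k < 3)%N /\ (z %% 3)%Z%:~R = k%:R :> algC.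
  by exists `|(z %% 3)%Z|%N; split; [lia | rewrite natr_absz ger0_norm //; lia].
have [a [ha ea]] := nat_rem m; have [b [hb eb]] := nat_rem n.
set r := a%:R + b%:R * omega; set q := eis (m %/ 3)%Z (n %/ 3)%Z.
have hr : S3 r by exists a, b.
have hq : Eis q by exists (m %/ 3)%Z, (n %/ 3)%Z.
have hxr : m%:~R + n%:~R * omega - r = 3 * q.
  by rewrite /r -ea -eb /q /eis {1}(divz_eq m 3) {1}(divz_eq n 3) !intrD !intrM; ring.
exists r; split=> [|s [hs [t [ht hxs]]]]; first by split=> //; exists q.
apply: S3_eq hr hs _; exists (t - q); split; first by solve_Eis.
by rewrite mulrBr -hxs -hxr; ring.
Qed.

Lemma S3_Eis {s} : S3 s -> Eis s.
Proof. by move=> [a [b [_ [_ ->]]]]; solve_Eis. Qed.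

Lemma S3_rep {x} : Eis x -> exists s, S3 s /\ Eis_congr 3 x s.
Proof. by move=> hx; have [_ /(_ x hx) [s [hs _]]] := reps_mod_S3; exists s. Qed.

Lemma mx2_Eis a b c d : Eis a -> Eis b -> Eis c -> Eis d ->
  forall i j, Eis (mx2 a b c d i j).
Proof. by move=> ha hb hc hd i j; rewrite mxE; case: i => [[|[|?]] ?]; case: j => [[|[|?]] ?]. Qed.

Lemma mx3_Eis a00 a01 a02 a10 a11 a12 a20 a21 a22 :
  Eis a00 -> Eis a01 -> Eis a02 -> Eis a10 -> Eis a11 -> Eis a12 ->
  Eis a20 -> Eis a21 -> Eis a22 ->
  forall i j, Eis (mx3 a00 a01 a02 a10 a11 a12 a20 a21 a22 i j).
Proof.
move=> ? ? ? ? ? ? ? ? ? i j; rewrite mxE.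
by case: i => [[|[|[|?]]] ?]; case: j => [[|[|[|?]]] ?].
Qed.

Lemma SL_o1 n : SL_o (1%:M : 'M[algC]_n).
Proof. by split; [move=> i j; rewrite mxE; apply: Eis_nat | rewrite det1]. Qed.

Lemma SL_oM {n} {A B : 'M[algC]_n} : SL_o A -> SL_o B -> SL_o (A *m B).
Proof.
move=> [hA dA] [hB dB]; split; last by rewrite det_mulmx dA dB mulr1.
by move=> i j; rewrite mxE; elim/big_ind: _ => [|x y hx hy|k _]; solve_Eis.
Qed.

Section SL2.
Context {y y' : 'M[algC]_2}.
Hypotheses (hdet : \det y = 1) (hdet' : \det y' = 1).
Let a : algC := y o2_0 o2_0. Let b : algC := y o2_0 o2_1.
Let c : algC := y o2_1 o2_0. Let d : algC := y o2_1 o2_1.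
Let a' : algC := y' o2_0 o2_0. Let b' : algC := y' o2_0 o2_1.
Let c' : algC := y' o2_1 o2_0. Let d' : algC := y' o2_1 o2_1.

Lemma SL2_bottom_row_scale : c * d' = d * c' ->
  c' = (a * d' - b * c') * c /\ d' = (a * d' - b * c') * d.
Proof.
move: hdet; rewrite det2E -/a -/b -/c -/d => /eqP; rewrite -subr_eq0 => /eqP h1.
move=> /eqP; rewrite -subr_eq0 => /eqP hx.
by split; [apply: (eq_sub_mul0_2 (- c') (- a) h1 hx) | apply: (eq_sub_mul0_2 (- d') (- b) h1 hx)];
  ring.
Qed.

Lemma SL2_top_left_sub : c' = c -> d' = d -> a - a' = c * (a' * b - a * b').
Proof.
move: hdet hdet'; rewrite !det2E -/a -/b -/c -/d -/a' -/b' -/c' -/d' => h1 h1' ec ed.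
have -> : a - a' = a * (a' * d' - b' * c') - a' * (a * d - b * c) by rewrite h1 h1' !mulr1.
by rewrite ec ed; ring.
Qed.

Lemma SL2_eq_bottom_row : a = a' -> c = c' -> d = d' -> c != 0 -> y = y'.
Proof.
move=> ea ec ed hc.
have : a * d - b * c = a' * d' - b' * c' by rewrite -!det2E hdet hdet'.
rewrite ea ec ed => /addrI /oppr_inj hb.
by rewrite (mx2_eta y) (mx2_eta y') -/a -/b -/c -/d ea ec ed (mulIf _ hb) // -ec.
Qed.

End SL2.

(** * Upper triangular matrices *)

Definition upper3 (B : 'M[algC]_3) : Prop :=
  [/\ B o3_1 o3_0 = 0, B o3_2 o3_0 = 0 & B o3_2 o3_1 = 0].

Lemma D3_mx3 {a b c} : Eis a -> Eis b -> Eis c -> a * b * c = 1 -> D3 (mx3 a 0 0 0 b 0 0 0 c).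
Proof.
move=> ha hb hc habc; split; [|split; [|by rewrite !mxE]].
  by move=> i j; rewrite mxE; case: i => [[|[|[|?]]] ?]; case: j => [[|[|[|?]]] ?].
by move=> i; rewrite mxE; case: i => [[|[|[|?]]] ?].
Qed.

Lemma U3_mx3 {a b c} : S3 a -> S3 b -> S3 c -> U3 (mx3 1 a b 0 1 c 0 0 1).
Proof.
move=> ha hb hc; split; first by move=> i; rewrite mxE; case: i => [[|[|[|?]]] ?].
split; last by rewrite !mxE.
by move=> i j; rewrite mxE; case: i => [[|[|[|?]]] ?]; case: j => [[|[|[|?]]] ?].
Qed.

Lemma GammaInf3_mx3 {p q r} : Eis_congr 3 p 0 -> Eis_congr 3 q 0 -> Eis_congr 3 r 0 ->
  GammaInf3 (mx3 1 p r 0 1 q 0 0 1).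
Proof.
move=> hp hq hr.
have Eis_of_congr x : Eis_congr 3 x 0 -> Eis x.
  by move=> [t [ht]]; rewrite subr0 => ->; solve_Eis.
split; last split.
- split.
    split; last by rewrite det_mx3; ring.
    by apply: mx3_Eis; solve [apply: Eis_of_congr | solve_Eis].
  move=> i j; rewrite mx3_1 !mxE.
  by case: i => [[|[|[|?]]] ?]; case: j => [[|[|[|?]]] ?] //=; apply: Eis_congr_refl.
- by move=> i j; rewrite mxE; case: i => [[|[|[|?]]] ?]; case: j => [[|[|[|?]]] ?].
- by move=> i; rewrite mxE; case: i => [[|[|[|?]]] ?].
Qed.

Lemma D3_eta {d} : D3 d -> d = mx3 (d o3_0 o3_0) 0 0 0 (d o3_1 o3_1) 0 0 0 (d o3_2 o3_2).
Proof.
move=> [hd _]; rewrite {1}(mx3_eta d).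
by rewrite (hd o3_0 o3_1) // (hd o3_0 o3_2) // (hd o3_1 o3_0) // (hd o3_1 o3_2) //
  (hd o3_2 o3_0) // (hd o3_2 o3_1).
Qed.

Lemma U3_eta {u} : U3 u -> u = mx3 1 (u o3_0 o3_1) (u o3_0 o3_2) 0 1 (u o3_1 o3_2) 0 0 1.
Proof.
move=> [h1 [h0 _]]; rewrite {1}(mx3_eta u) !h1.
by rewrite (h0 o3_1 o3_0) // (h0 o3_2 o3_0) // (h0 o3_2 o3_1).
Qed.

Lemma GammaInf3_eta {g} : GammaInf3 g ->
  g = mx3 1 (g o3_0 o3_1) (g o3_0 o3_2) 0 1 (g o3_1 o3_2) 0 0 1.
Proof.
move=> [_ [h0 h1]]; rewrite {1}(mx3_eta g) !h1.
by rewrite (h0 o3_1 o3_0) // (h0 o3_2 o3_0) // (h0 o3_2 o3_1).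
Qed.

Lemma GammaInf3_congr {g} : GammaInf3 g ->
  [/\ Eis_congr 3 (g o3_0 o3_1) 0, Eis_congr 3 (g o3_0 o3_2) 0 & Eis_congr 3 (g o3_1 o3_2) 0].
Proof.
move=> [[_ hc] _].
by have := hc o3_0 o3_1; have := hc o3_0 o3_2; have := hc o3_1 o3_2; rewrite !mxE.
Qed.

Lemma D3_SL {d} : D3 d -> SL_o d.
Proof.
move=> hd; have [_ [hE hp]] := hd.
by rewrite (D3_eta hd); split; [apply: mx3_Eis; solve_Eis | rewrite det_mx3 -hp; ring].
Qed.

Lemma D3_diag_neq0 {d} : D3 d -> d o3_0 o3_0 != 0 /\ d o3_1 o3_1 != 0.
Proof.
move=> [_ [_ hp]]; have := oner_neq0 algC.
by rewrite -hp !mulf_eq0 !negb_or => /andP [/andP [-> ->] _].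
Qed.

Lemma U3_SL {u} : U3 u -> SL_o u.
Proof.
move=> hu; have [_ [_ [/S3_Eis h01 [/S3_Eis h02 /S3_Eis h12]]]] := hu.
by rewrite (U3_eta hu); split; [apply: mx3_Eis; solve_Eis | rewrite det_mx3; ring].
Qed.

Lemma unipotent_mulmx {u g} : U3 u -> GammaInf3 g ->
  u *m g = mx3 1 (u o3_0 o3_1 + g o3_0 o3_1)
                 (u o3_0 o3_2 + g o3_0 o3_2 + u o3_0 o3_1 * g o3_1 o3_2)
               0 1 (u o3_1 o3_2 + g o3_1 o3_2) 0 0 1.
Proof.
by move=> hu hg; rewrite {1}(U3_eta hu) {1}(GammaInf3_eta hg) mulmx_mx3; congr mx3; ring.
Qed.

Lemma borel_mx3 {d u g} : D3 d -> U3 u -> GammaInf3 g ->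
  let N := u *m g in
  d *m u *m g = mx3 (d o3_0 o3_0) (d o3_0 o3_0 * N o3_0 o3_1) (d o3_0 o3_0 * N o3_0 o3_2)
                    0 (d o3_1 o3_1) (d o3_1 o3_1 * N o3_1 o3_2) 0 0 (d o3_2 o3_2).
Proof.
move=> hd hu hg N; rewrite -mulmxA -/N {1}(D3_eta hd) /N (unipotent_mulmx hu hg).
by rewrite mulmx_mx3 !mxE /=; congr mx3; ring.
Qed.

Lemma borel_upper {d u g} : D3 d -> U3 u -> GammaInf3 g ->
  let B := d *m u *m g in
  [/\ SL_o B, upper3 B, B o3_0 o3_0 != 0 & B o3_1 o3_1 != 0].
Proof.
move=> hd hu hg B; have [hd0 hd1] := D3_diag_neq0 hd.
split; first by apply: SL_oM; [apply: SL_oM; [apply: D3_SL | apply: U3_SL] | case: hg => [[]]].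
all: by rewrite /B /upper3 (borel_mx3 hd hu hg) !mxE.
Qed.

Lemma upper3_diag_unipotent {B} : upper3 B ->
  B o3_0 o3_0 * B o3_1 o3_1 * B o3_2 o3_2 = 1 ->
  B = mx3 (B o3_0 o3_0) 0 0 0 (B o3_1 o3_1) 0 0 0 (B o3_2 o3_2) *m
      mx3 1 (B o3_0 o3_1 * B o3_1 o3_1 * B o3_2 o3_2) (B o3_0 o3_2 * B o3_1 o3_1 * B o3_2 o3_2)
          0 1 (B o3_1 o3_2 * B o3_0 o3_0 * B o3_2 o3_2) 0 0 1.
Proof.
move=> [h10 h20 h21] /eqP; rewrite -subr_eq0 => /eqP hp.
rewrite {1}(mx3_eta B) h10 h20 h21 mulmx_mx3.
congr mx3; rewrite ?mul0r ?mulr0 ?addr0 ?add0r ?mulr1 //.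
- by apply: (eq_sub_mul0 (- B o3_0 o3_1) hp); ring.
- by apply: (eq_sub_mul0 (- B o3_0 o3_2) hp); ring.
- by apply: (eq_sub_mul0 (- B o3_1 o3_2) hp); ring.
Qed.

Lemma unipotent_decomp x z w : Eis x -> Eis z -> Eis w ->
  exists u g, U3 u /\ GammaInf3 g /\ mx3 1 x z 0 1 w 0 0 1 = u *m g.
Proof.
move=> hx hz hw.
have [a [ha hxa]] := S3_rep hx; have [c [hc hwc]] := S3_rep hw.
have [b [hb hzb]] : exists b, S3 b /\ Eis_congr 3 (z - a * (w - c)) b.
  by apply: S3_rep; have := S3_Eis ha; have := S3_Eis hc; solve_Eis.
exists (mx3 1 a b 0 1 c 0 0 1), (mx3 1 (x - a) (z - a * (w - c) - b) 0 1 (w - c) 0 0 1).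
split; first exact: U3_mx3.
split; first by apply: GammaInf3_mx3; apply: Eis_congr_sub0.
by rewrite mulmx_mx3; congr mx3; ring.
Qed.

Lemma borel_decomp {B} : SL_o B -> upper3 B ->
  exists d u g, [/\ D3 d, U3 u, GammaInf3 g & B = d *m u *m g].
Proof.
move=> [hE hdet] hB; have [h10 h20 h21] := hB.
have hp : B o3_0 o3_0 * B o3_1 o3_1 * B o3_2 o3_2 = 1.
  by rewrite -hdet det3E h10 h20 h21; ring.
have [u [g [hu [hg hN]]]] := @unipotent_decomp (B o3_0 o3_1 * B o3_1 o3_1 * B o3_2 o3_2)
  (B o3_0 o3_2 * B o3_1 o3_1 * B o3_2 o3_2) (B o3_1 o3_2 * B o3_0 o3_0 * B o3_2 o3_2)
  ltac:(solve_Eis) ltac:(solve_Eis) ltac:(solve_Eis).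
exists (mx3 (B o3_0 o3_0) 0 0 0 (B o3_1 o3_1) 0 0 0 (B o3_2 o3_2)), u, g; split=> //.
  by apply: D3_mx3; solve_Eis.
by rewrite -mulmxA -hN -upper3_diag_unipotent.
Qed.

Lemma unipotent_decomp_uniq {u g u' g'} : U3 u -> GammaInf3 g -> U3 u' -> GammaInf3 g' ->
  u *m g = u' *m g' -> u = u'.
Proof.
move=> hu hg hu' hg'; rewrite (unipotent_mulmx hu hg) (unipotent_mulmx hu' hg').
move=> /(congr1 (fun M : 'M[algC]_3 => (M o3_0 o3_1, M o3_0 o3_2, M o3_1 o3_2))); rewrite !mxE /=.
move=> -[e01 e02 e12].
have [_ [_ [s01 [s02 s12]]]] := hu; have [_ [_ [s01' [s02' s12']]]] := hu'.
have [c01 c02 c12] := GammaInf3_congr hg; have [c01' c02' c12'] := GammaInf3_congr hg'.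
have eu01 := reps_mod_eq reps_mod_S3 s01 s01' (Eis_congr_addr c01 c01' e01).
have eu12 := reps_mod_eq reps_mod_S3 s12 s12' (Eis_congr_addr c12 c12' e12).
have eg12 : g o3_1 o3_2 = g' o3_1 o3_2 by move: e12; rewrite eu12 => /addrI.
move: e02; rewrite eu01 eg12 => /addIr e02.
have eu02 := reps_mod_eq reps_mod_S3 s02 s02' (Eis_congr_addr c02 c02' e02).
by rewrite (U3_eta hu) (U3_eta hu') eu01 eu02 eu12.
Qed.

Lemma borel_decomp_uniq {d u g d' u' g'} :
  D3 d -> U3 u -> GammaInf3 g -> D3 d' -> U3 u' -> GammaInf3 g' ->
  d *m u *m g = d' *m u' *m g' -> d = d' /\ u = u'.
Proof.
move=> hd hu hg hd' hu' hg' E.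
have ed : d = d'.
  move: E; rewrite (borel_mx3 hd hu hg) (borel_mx3 hd' hu' hg').
  move=> /(congr1 (fun M : 'M[algC]_3 => (M o3_0 o3_0, M o3_1 o3_1, M o3_2 o3_2))).
  by rewrite !mxE /= => -[e0 e1 e2]; rewrite (D3_eta hd) (D3_eta hd') e0 e1 e2.
split=> //; apply: (unipotent_decomp_uniq hu hg hu' hg').
apply: (can_inj (mulKmx (unitmx_det1 (D3_SL hd).2))).
by rewrite !mulmxA E ed.
Qed.

(** * The embeddings phi_1 and phi_2 *)

Lemma phi1E (y : 'M[algC]_2) :
  phi1 y = mx3 (y o2_0 o2_0) (y o2_0 o2_1) 0 (y o2_1 o2_0) (y o2_1 o2_1) 0 0 0 1.
Proof.
have i0 : inord 0 = o2_0 by apply/val_inj; rewrite /= inordK.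
have i1 : inord 1 = o2_1 by apply/val_inj; rewrite /= inordK.
apply/matrixP => i j; rewrite !mxE.
by case: i => [[|[|[|?]]] ?]; case: j => [[|[|[|?]]] ?] //=; rewrite ?i0 ?i1.
Qed.

Lemma phi2E (y : 'M[algC]_2) :
  phi2 y = mx3 1 0 0 0 (y o2_0 o2_0) (y o2_0 o2_1) 0 (y o2_1 o2_0) (y o2_1 o2_1).
Proof.
have i0 : inord 0 = o2_0 by apply/val_inj; rewrite /= inordK.
have i1 : inord 1 = o2_1 by apply/val_inj; rewrite /= inordK.
apply/matrixP => i j; rewrite !mxE.
by case: i => [[|[|[|?]]] ?]; case: j => [[|[|[|?]]] ?] //=; rewrite ?i0 ?i1.
Qed.

Lemma phi1M x z : phi1 (x *m z) = phi1 x *m phi1 z.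
Proof. by rewrite !phi1E mulmx_mx3 !mulmx2E; congr mx3; ring. Qed.

Lemma phi2M x z : phi2 (x *m z) = phi2 x *m phi2 z.
Proof. by rewrite !phi2E mulmx_mx3 !mulmx2E; congr mx3; ring. Qed.

Lemma phi1_1 : phi1 1%:M = 1%:M.
Proof. by rewrite phi1E mx2_1 mx3_1 !mxE. Qed.

Lemma phi2_1 : phi2 1%:M = 1%:M.
Proof. by rewrite phi2E mx2_1 mx3_1 !mxE. Qed.

Section PhiInverse.
Context {y : 'M[algC]_2}. Hypothesis hy : \det y = 1.

Lemma phi1_mulKmx (A : 'M[algC]_3) : phi1 (invmx y) *m (phi1 y *m A) = A.
Proof. by rewrite mulmxA -phi1M mulVmx ?unitmx_det1 // phi1_1 mul1mx. Qed.

Lemma phi2_mulKmx (A : 'M[algC]_3) : phi2 (invmx y) *m (phi2 y *m A) = A.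
Proof. by rewrite mulmxA -phi2M mulVmx ?unitmx_det1 // phi2_1 mul1mx. Qed.

Lemma phi2_mulKVmx (A : 'M[algC]_3) : phi2 y *m (phi2 (invmx y) *m A) = A.
Proof. by rewrite mulmxA -phi2M mulmxV ?unitmx_det1 // phi2_1 mul1mx. Qed.

End PhiInverse.

Lemma SL_o_phi1 {y} : SL_o y -> SL_o (phi1 y).
Proof.
move=> [hE hdet]; rewrite phi1E; split; first by apply: mx3_Eis; solve_Eis.
by rewrite det_mx3 -[RHS]hdet det2E; ring.
Qed.

Lemma SL_o_phi2 {y} : SL_o y -> SL_o (phi2 y).
Proof.
move=> [hE hdet]; rewrite phi2E; split; first by apply: mx3_Eis; solve_Eis.
by rewrite det_mx3 -[RHS]hdet det2E; ring.
Qed.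

Lemma SL_o_invmx {y : 'M[algC]_2} : SL_o y -> SL_o (invmx y).
Proof.
move=> [hE hdet]; split; last by rewrite det_inv hdet invr1.
by rewrite invmx_det1 //; apply: mx2_Eis; solve_Eis.
Qed.

Section PhiRows.
Variables (y : 'M[algC]_2) (A : 'M[algC]_3) (j : 'I_3).

Lemma phi1_row1 : (phi1 y *m A) o3_1 j = y o2_1 o2_0 * A o3_0 j + y o2_1 o2_1 * A o3_1 j.
Proof. by rewrite mulmx3E phi1E !mxE /=; ring. Qed.
Lemma phi1_row2 : (phi1 y *m A) o3_2 j = A o3_2 j.
Proof. by rewrite mulmx3E phi1E !mxE /=; ring. Qed.
Lemma phi2_row0 : (phi2 y *m A) o3_0 j = A o3_0 j.
Proof. by rewrite mulmx3E phi2E !mxE /=; ring. Qed.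
Lemma phi2_row1 : (phi2 y *m A) o3_1 j = y o2_0 o2_0 * A o3_1 j + y o2_0 o2_1 * A o3_2 j.
Proof. by rewrite mulmx3E phi2E !mxE /=; ring. Qed.
Lemma phi2_row2 : (phi2 y *m A) o3_2 j = y o2_1 o2_0 * A o3_1 j + y o2_1 o2_1 * A o3_2 j.
Proof. by rewrite mulmx3E phi2E !mxE /=; ring. Qed.

End PhiRows.

(* The minor a_21 a_32 - a_22 a_31 of the paper (indices are 0-based here). *)
Definition minor10 (A : 'M[algC]_3) : algC :=
  A o3_1 o3_0 * A o3_2 o3_1 - A o3_1 o3_1 * A o3_2 o3_0.

Lemma minor10_phi2 {y} (A : 'M[algC]_3) : \det y = 1 -> minor10 (phi2 y *m A) = minor10 A.
Proof.
by rewrite /minor10 !phi2_row1 !phi2_row2 det2E => hdet; rewrite -[RHS]mul1r -hdet; ring.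
Qed.

Lemma col0_mul_upper {G B : 'M[algC]_3} {i} : B o3_1 o3_0 = 0 -> B o3_2 o3_0 = 0 ->
  (G *m B) i o3_0 = G i o3_0 * B o3_0 o3_0.
Proof. by move=> h1 h2; rewrite mulmx3E h1 h2 !mulr0 !addr0. Qed.

Lemma minor10_mul_upper (G B : 'M[algC]_3) : upper3 B ->
  minor10 (G *m B) = B o3_0 o3_0 * B o3_1 o3_1 * minor10 G.
Proof. by move=> [h1 h2 h3]; rewrite /minor10 !mulmx3E h1 h2 h3; ring. Qed.

(* The common left factor phi_2(y1^-1) phi_1(y2^-1) of the representatives
   of Delta_{1,0} and Delta_{1,1}. *)
Definition lead10 (y1 y2 : 'M[algC]_2) : 'M[algC]_3 := phi2 (invmx y1) *m phi1 (invmx y2).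

Section Lead.
Context {y1 y2 y3 : 'M[algC]_2}.
Hypotheses (hy1 : \det y1 = 1) (hy2 : \det y2 = 1) (hy3 : \det y3 = 1).

Lemma lead10_col0 :
  [/\ lead10 y1 y2 o3_0 o3_0 = y2 o2_1 o2_1,
      lead10 y1 y2 o3_1 o3_0 = - (y2 o2_1 o2_0 * y1 o2_1 o2_1) &
      lead10 y1 y2 o3_2 o3_0 = y2 o2_1 o2_0 * y1 o2_1 o2_0].
Proof. by rewrite /lead10 !invmx_det1 // phi2E phi1E mulmx_mx3 !mxE /=; split; ring. Qed.

Lemma minor10_lead10 : minor10 (lead10 y1 y2) = 0.
Proof. by rewrite /minor10 /lead10 !invmx_det1 // phi2E phi1E mulmx_mx3 !mxE /=; ring. Qed.

Lemma minor10_lead11 :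
  minor10 (lead10 y1 y2 *m phi2 (invmx y3)) = y2 o2_1 o2_0 * y3 o2_1 o2_0.
Proof.
move: hy1; rewrite det2E => /eqP; rewrite -subr_eq0 => /eqP h1.
rewrite /minor10 /lead10 !invmx_det1 // !phi2E phi1E !mulmx_mx3 !mxE /=.
by apply: (eq_sub_mul0 (y2 o2_1 o2_0 * y3 o2_1 o2_0) h1); ring.
Qed.

End Lead.

(** * The cosets of Delta_2, Delta_{1,0} and Delta_{1,1} *)

Lemma Delta2_Delta10_disj A : ~ (Delta2 A /\ Delta10 A).
Proof. by move=> [[_ [h1 h2]] [_ [[] ]]]. Qed.

Lemma Delta2_Delta11_disj A : ~ (Delta2 A /\ Delta11 A).
Proof. by move=> [[_ [h1 h2]] [_ []]]; rewrite h1 h2 mulr0 mul0r subrr. Qed.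

Lemma Delta10_Delta11_disj A : ~ (Delta10 A /\ Delta11 A).
Proof. by move=> [[_ [_ h]] [_ []]]. Qed.

Lemma SL_o_Delta A : SL_o A <-> Delta2 A \/ Delta10 A \/ Delta11 A.
Proof.
split; last by case=> [[]|[[]|[]]].
move=> hA; have [m0|/eqP mn0] := eqVneq (minor10 A) 0; last by do 2 right.
have [/eqP a10|a10] := boolP (A o3_1 o3_0 != 0); first by right; left; do 2!split=> //; left.
have [/eqP a20|a20] := boolP (A o3_2 o3_0 != 0); first by right; left; do 2!split=> //; right.
by left; move/negPn/eqP: a10; move/negPn/eqP: a20.
Qed.

Lemma in_coset_borel {G d u A : 'M[algC]_3} : in_coset (G *m d *m u) A ->
  exists g, GammaInf3 g /\ A = G *m (d *m u *m g).
Proof. by move=> [g [hg ->]]; exists g; rewrite !mulmxA. Qed.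

Lemma coset_of_upper (G : 'M[algC]_3) {B} : SL_o B -> upper3 B ->
  exists d u, [/\ D3 d, U3 u & in_coset (G *m d *m u) (G *m B)].
Proof.
move=> hB hBu; have [d [u [g [hd hu hg ->]]]] := borel_decomp hB hBu.
by exists d, u; split=> //; exists g; split=> //; rewrite !mulmxA.
Qed.

Section Representatives.
Context {Rc : algC -> Prop} {Ra : algC -> algC -> Prop}.
Hypotheses (hRc : reps_units Rc) (hRa : forall c, Eis c -> c <> 0 -> reps_mod c (Ra c)).

Lemma Yset_SL {y} : Yset Rc Ra y -> SL_o y.
Proof. by case=> [[]|->] //; apply: SL_o1. Qed.

Lemma Yset_det {y} : Yset Rc Ra y -> \det y = 1.
Proof. by case/Yset_SL. Qed.

Lemma Yset_eq1 {y} : Yset Rc Ra y -> y o2_1 o2_0 = 0 -> y = 1%:M.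
Proof. by case=> [[_ [hc _]] h0|//]; have [/(_ _ hc) [_]] := hRc; rewrite h0. Qed.

Lemma Yset_exists {p q s t} : Eis p -> Eis q -> Eis s -> Eis t -> s * p + t * q = 1 ->
  exists y l, Yset Rc Ra y /\ y o2_1 o2_0 = l * p /\ y o2_1 o2_1 = l * q.
Proof.
move=> hp hq hs ht hst.
have [p0|/eqP pn0] := eqVneq p 0.
  exists 1%:M, t; split; first by right.
  by rewrite mx2_1 !mxE /= p0 mulr0 -hst p0; split=> //; ring.
have [[hRc1 _] [_ /(_ p hp pn0) [c [[hc [e [[he [e' [he' hee']]] hpc]]] _]]]] := (hRc, hRc).
have [hcE hc0] := hRc1 c hc.
have [hRa1 /(_ (t * e)) []] := hRa c hcE hc0; first by solve_Eis.
move=> a [[ha [k [hk hak]]] _].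
(* [c] represents the class of [p], [a] represents [t e] modulo [c], and [b]
   is then forced by the determinant. *)
set d := e' * q; set b := - (s * e) - k * d.
have hdet : a * d - b * c = 1.
  rewrite -hst hpc /b /d; have -> : a = t * e - c * k by rewrite -hak; ring.
  by rewrite -[q in RHS]mul1r -hee'; ring.
exists (mx2 a b c d), e'; split.
  left; split; last by rewrite !mxE.
  split; last by rewrite det_mx2.
  by apply: mx2_Eis; rewrite /b /d; solve_Eis.
by rewrite !mxE /= hpc mulrA (mulrC e') hee' mul1r.
Qed.

(* Proportional primitive bottom rows differ by a unit; the choice of
   representatives then forces equal bottom rows and equal top-left entries. *)
Lemma Yset_inj {y y'} : Yset Rc Ra y -> Yset Rc Ra y' ->
  y o2_1 o2_0 * y' o2_1 o2_1 = y o2_1 o2_1 * y' o2_1 o2_0 -> y = y'.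
Proof.
move=> hy hy' hx.
have [hyE hdet] := Yset_SL hy; have [hyE' hdet'] := Yset_SL hy'.
have hx' : y' o2_1 o2_0 * y o2_1 o2_1 = y' o2_1 o2_1 * y o2_1 o2_0 by rewrite mulrC -hx mulrC.
have [ec' ed'] := SL2_bottom_row_scale hdet hx.
have [ec ed] := SL2_bottom_row_scale hdet' hx'.
set l := _ - _ in ec' ed'; set l' := _ - _ in ec ed.
have [c0|cn0] := eqVneq (y o2_1 o2_0) 0.
  by rewrite (Yset_eq1 hy c0) (Yset_eq1 hy') // ec' c0 mulr0.
have hl : Eis_unit l.
  split; first by rewrite /l; solve_Eis.
  exists l'; split; first by rewrite /l'; solve_Eis.
  by apply: (mulIf cn0); rewrite mul1r (mulrC l) -mulrA -ec' -ec.
case: hy => [[_ [hRcy hRay]]|y1]; last by rewrite y1 mx2_1 mxE /= eqxx in cn0.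
case: hy' => [[_ [hRcy' hRay']]|y1]; last by rewrite ec y1 mx2_1 mxE /= mulr0 eqxx in cn0.
have ecc : y' o2_1 o2_0 = y o2_1 o2_0.
  by apply: reps_units_eq hRc hRcy' hRcy _; exists l.
have l1 : l = 1 by apply: (mulIf cn0); rewrite -ec' ecc mul1r.
have edd : y' o2_1 o2_1 = y o2_1 o2_1 by rewrite ed' l1 mul1r.
have [hcE hc0] : Eis (y o2_1 o2_0) /\ y o2_1 o2_0 <> 0 by split; [apply: hyE | apply/eqP].
have eaa : y o2_0 o2_0 = y' o2_0 o2_0.
  apply: reps_mod_eq (hRa _ hcE hc0) hRay _ _; first by rewrite -ecc.
  by exists (y' o2_0 o2_0 * y o2_0 o2_1 - y o2_0 o2_0 * y' o2_0 o2_1); split;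
    [solve_Eis | apply: SL2_top_left_sub].
by apply: SL2_eq_bottom_row.
Qed.

Lemma Yset_annihilate {x1 x2} : Eis x1 -> Eis x2 ->
  exists y, Yset Rc Ra y /\ y o2_1 o2_0 * x1 + y o2_1 o2_1 * x2 = 0.
Proof.
move=> hx1 hx2.
have [g [x1' [x2' [s [t [[h1 h2 hs ht] [-> [-> hst]]]]]]]] := Eis_bezout hx1 hx2.
have hst' : (- t) * (- x2') + s * x1' = 1 by rewrite -hst; ring.
have [y [l [hy [hc hd]]]] := Yset_exists (EisN h2) h1 (EisN ht) hs hst'.
by exists y; split=> //; rewrite hc hd; ring.
Qed.


Lemma Yset_neq1 {y} : Yset Rc Ra y -> y <> 1%:M -> y o2_1 o2_0 != 0.
Proof. by move=> hy hn; apply/eqP => /(Yset_eq1 hy). Qed.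

Lemma SL_o_phi2_inv {y} : Yset Rc Ra y -> SL_o (phi2 (invmx y)).
Proof. by move=> hy; apply/SL_o_phi2/SL_o_invmx/(Yset_SL hy). Qed.

Lemma SL_o_lead10 {y1 y2} : Yset Rc Ra y1 -> Yset Rc Ra y2 -> SL_o (lead10 y1 y2).
Proof.
move=> hy1 hy2; apply: SL_oM (SL_o_phi2_inv hy1) _.
exact/SL_o_phi1/SL_o_invmx/(Yset_SL hy2).
Qed.

Definition cidx_Delta (k : cidx) : 'M[algC]_3 -> Prop :=
  match k with
  | Ix2 _ _ _ => Delta2
  | Ix10 _ _ _ _ => Delta10
  | Ix11 _ _ _ _ _ => Delta11
  end.

Lemma cidx_coset_Delta {k A} : cidx_valid Rc Ra k -> in_coset (cidx_lead k) A -> cidx_Delta k A.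
Proof.
case: k => [y d u|y1 y2 d u|y1 y2 y3 d u] /=.
- move=> [hy [hd hu]] /in_coset_borel [g [hg ->]].
  have [hB [b10 b20 _] _ _] := borel_upper hd hu hg.
  split; first exact: SL_oM (SL_o_phi2_inv hy) hB.
  by rewrite !(col0_mul_upper b10 b20) phi2E !mxE /= !mul0r.
- move=> [hy1 [hy2 [hn2 [hd hu]]]] /in_coset_borel [g [hg ->]]; rewrite -/(lead10 y1 y2).
  have [hB hBu b00 _] := borel_upper hd hu hg; have [b10 b20 _] := hBu.
  have [hdet1 hdet2] := (Yset_det hy1, Yset_det hy2).
  split; first exact: SL_oM (SL_o_lead10 hy1 hy2) hB.
  split; last by rewrite -/(minor10 _) minor10_mul_upper // minor10_lead10 // mulr0.
  rewrite !(col0_mul_upper b10 b20); have [_ -> ->] := lead10_col0 hdet1 hdet2.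
  have c2 := Yset_neq1 hy2 hn2.
  have [c1|c1] := eqVneq (y1 o2_1 o2_0) 0; [left | right]; apply/eqP; rewrite !mulf_neq0 //.
  rewrite oppr_eq0 mulf_neq0 //; apply/eqP => d1.
  by move: hdet1; rewrite det2E c1 d1 !mulr0 subrr => /eqP; rewrite eq_sym oner_eq0.
- move=> [hy1 [hy2 [hy3 [hn2 [hn3 [hd hu]]]]]] /in_coset_borel [g [hg ->]].
  rewrite -/(lead10 y1 y2).
  have [hB hBu b00 b11] := borel_upper hd hu hg.
  split; first exact: SL_oM (SL_oM (SL_o_lead10 hy1 hy2) (SL_o_phi2_inv hy3)) hB.
  rewrite -/(minor10 _) minor10_mul_upper // minor10_lead11 ?Yset_det //.
  by apply/eqP; rewrite !mulf_neq0 // Yset_neq1.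
Qed.

Lemma Yset_clear_phi2 {A} j : SL_o A -> exists y, Yset Rc Ra y /\ (phi2 y *m A) o3_2 j = 0.
Proof.
move=> [hA _]; have [y [hy h]] := Yset_annihilate (hA o3_1 j) (hA o3_2 j).
by exists y; rewrite phi2_row2.
Qed.

Lemma Yset_clear_phi1 {A} j : SL_o A -> exists y, Yset Rc Ra y /\ (phi1 y *m A) o3_1 j = 0.
Proof.
move=> [hA _]; have [y [hy h]] := Yset_annihilate (hA o3_0 j) (hA o3_1 j).
by exists y; rewrite phi1_row1.
Qed.

Lemma Delta2_cosets A : Delta2 A ->
  exists y d u, cidx_valid Rc Ra (Ix2 y d u) /\ in_coset (cidx_lead (Ix2 y d u)) A.
Proof.
move=> [hA [a10 a20]]; have [y [hy b21]] := Yset_clear_phi2 o3_1 hA.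
set B := phi2 y *m A in b21 *.
have hBu : upper3 B by split; rewrite // /B ?phi2_row1 ?phi2_row2 a10 a20 !mulr0 addr0.
have [d [u [hd hu]]] := coset_of_upper (phi2 (invmx y)) (SL_oM (SL_o_phi2 (Yset_SL hy)) hA) hBu.
by rewrite /B phi2_mulKmx ?Yset_det // => hc; exists y, d, u.
Qed.

Lemma Delta10_cosets A : Delta10 A ->
  exists y1 y2 d u, cidx_valid Rc Ra (Ix10 y1 y2 d u) /\ in_coset (cidx_lead (Ix10 y1 y2 d u)) A.
Proof.
move=> [hA [hne hm]]; have [y1 [hy1 a20]] := Yset_clear_phi2 o3_0 hA.
have dy1 := Yset_det hy1; have hA1 := SL_oM (SL_o_phi2 (Yset_SL hy1)) hA.
have := minor10_phi2 A dy1; move: (phi2 y1 *m A) (phi2_mulKmx dy1 A) hA1 a20.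
move=> A1 eA hA1 a20 hm1.
have a10 : A1 o3_1 o3_0 != 0.
  apply/eqP => a10; move: hne; rewrite -eA phi2_row1 phi2_row2 a10 a20 !mulr0 addr0.
  by case.
have a21 : A1 o3_2 o3_1 = 0.
  have : minor10 A1 = 0 by rewrite hm1.
  by rewrite /minor10 a20 mulr0 subr0 => /eqP; rewrite mulf_eq0 (negbTE a10) => /eqP.
have [y2 [hy2 b10]] := Yset_clear_phi1 o3_0 hA1.
have hn2 : y2 <> 1%:M by move=> y21; move: b10; rewrite y21 phi1_1 mul1mx; apply/eqP.
have hBu : upper3 (phi1 y2 *m A1) by split; rewrite // phi1_row2.
have [d [u [hd hu]]] := coset_of_upper (lead10 y1 y2) (SL_oM (SL_o_phi1 (Yset_SL hy2)) hA1) hBu.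
have -> : lead10 y1 y2 *m (phi1 y2 *m A1) = A.
  by rewrite /lead10 -mulmxA phi1_mulKmx ?Yset_det // eA.
by exists y1, y2, d, u.
Qed.

Lemma Delta11_cosets A : Delta11 A ->
  exists y1 y2 y3 d u, cidx_valid Rc Ra (Ix11 y1 y2 y3 d u) /\
                       in_coset (cidx_lead (Ix11 y1 y2 y3 d u)) A.
Proof.
move=> [hA hm]; have [y1 [hy1 a20]] := Yset_clear_phi2 o3_0 hA.
have dy1 := Yset_det hy1; have hA1 := SL_oM (SL_o_phi2 (Yset_SL hy1)) hA.
have := minor10_phi2 A dy1; move: (phi2 y1 *m A) (phi2_mulKmx dy1 A) hA1 a20.
move=> A1 eA hA1 a20; rewrite /minor10 a20 mulr0 subr0 => hm1.
have /andP [a10 a21] : (A1 o3_1 o3_0 != 0) && (A1 o3_2 o3_1 != 0).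
  by rewrite -negb_or -mulf_eq0 hm1; apply/eqP.
have [y2 [hy2 b10]] := Yset_clear_phi1 o3_0 hA1.
have hn2 : y2 <> 1%:M by move=> y21; move: b10; rewrite y21 phi1_1 mul1mx; apply/eqP.
have hA2 := SL_oM (SL_o_phi1 (Yset_SL hy2)) hA1.
have [y3 [hy3 c21]] := Yset_clear_phi2 o3_1 hA2.
have hn3 : y3 <> 1%:M.
  by move=> y31; move: c21; rewrite y31 phi2_1 mul1mx phi1_row2; apply/eqP.
have hBu : upper3 (phi2 y3 *m (phi1 y2 *m A1)).
  by split; rewrite // ?phi2_row1 ?phi2_row2 b10 phi1_row2 a20 !mulr0 addr0.
have [d [u [hd hu]]] :=
  coset_of_upper (lead10 y1 y2 *m phi2 (invmx y3)) (SL_oM (SL_o_phi2 (Yset_SL hy3)) hA2) hBu.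
have -> : lead10 y1 y2 *m phi2 (invmx y3) *m (phi2 y3 *m (phi1 y2 *m A1)) = A.
  by rewrite /lead10 -!mulmxA phi2_mulKmx ?Yset_det // phi1_mulKmx ?Yset_det // eA.
by exists y1, y2, y3, d, u.
Qed.

(* Left multiplication by phi_2(y') shows that phi_2(y' y^-1) is upper
   triangular, i.e. that y and y' have proportional bottom rows. *)
Lemma Yset_eq_of_phi2_coset {y y' B B'} : Yset Rc Ra y -> Yset Rc Ra y' ->
  upper3 B -> upper3 B' -> B o3_1 o3_1 != 0 ->
  phi2 (invmx y) *m B = phi2 (invmx y') *m B' -> y = y' /\ B = B'.
Proof.
move=> hy hy' [_ _ b21] [_ _ b21'] b11 E.
have ey : y = y'.
  apply: (Yset_inj hy hy').
  have := congr1 (fun M : 'M[algC]_3 => (phi2 y' *m M) o3_2 o3_1) E.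
  rewrite /= phi2_mulKVmx ?Yset_det // b21' mulmxA -phi2M phi2_row2 b21 mulr0 addr0.
  rewrite mulmx2E invmx_det1 ?Yset_det // !mxE /= => /eqP; rewrite mulf_eq0 (negbTE b11) orbF.
  by move=> /eqP h; apply: (eq_sub_mul0 (-1) h); ring.
split=> //; rewrite -ey in E.
by rewrite -(phi2_mulKVmx (Yset_det hy) B) E phi2_mulKVmx ?Yset_det.
Qed.

Lemma lead10_col0_inj {y1 y2 y1' y2' b b'} :
  Yset Rc Ra y1 -> Yset Rc Ra y2 -> Yset Rc Ra y1' -> Yset Rc Ra y2' ->
  y2 <> 1%:M -> y2' <> 1%:M -> b != 0 -> b' != 0 ->
  (forall i, lead10 y1 y2 i o3_0 * b = lead10 y1' y2' i o3_0 * b') -> y1 = y1' /\ y2 = y2'.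
Proof.
move=> hy1 hy2 hy1' hy2' hn2 hn2' hb hb' hcol.
have c2 := Yset_neq1 hy2 hn2; have c2' := Yset_neq1 hy2' hn2'.
have [e0 e1 e2] := lead10_col0 (Yset_det hy1) (Yset_det hy2).
have [e0' e1' e2'] := lead10_col0 (Yset_det hy1') (Yset_det hy2').
have := hcol o3_0; have := hcol o3_1; have := hcol o3_2.
rewrite e0 e0' e1 e1' e2 e2' !mulNr => h2 /oppr_inj h1 h0.
have ey1 : y1 = y1'.
  apply: (Yset_inj hy1 hy1').
  have hk : y2 o2_1 o2_0 * b * (y2' o2_1 o2_0 * b') != 0 by rewrite !mulf_neq0.
  apply: (mulIf hk).
  transitivity (y2 o2_1 o2_0 * y1 o2_1 o2_0 * b * (y2' o2_1 o2_0 * y1' o2_1 o2_1 * b'));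
    first by ring.
  by rewrite h2 -h1; ring.
subst y1'; split=> //.
have ecb : y2 o2_1 o2_0 * b = y2' o2_1 o2_0 * b'.
  rewrite -[LHS]mulr1 -[RHS]mulr1 -(Yset_det hy1) det2E.
  transitivity (y1 o2_0 o2_0 * (y2 o2_1 o2_0 * y1 o2_1 o2_1 * b)
                - y1 o2_0 o2_1 * (y2 o2_1 o2_0 * y1 o2_1 o2_0 * b)); first by ring.
  by rewrite h1 h2; ring.
apply: (Yset_inj hy2 hy2'); apply: (mulIf (mulf_neq0 hb hb')).
transitivity (y2 o2_1 o2_0 * b * (y2' o2_1 o2_1 * b')); first by ring.
by rewrite ecb -h0; ring.
Qed.

Lemma cidx_uniq2 {y d u y' d' u' A} :
  cidx_valid Rc Ra (Ix2 y d u) -> cidx_valid Rc Ra (Ix2 y' d' u') ->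
  in_coset (cidx_lead (Ix2 y d u)) A -> in_coset (cidx_lead (Ix2 y' d' u')) A ->
  Ix2 y d u = Ix2 y' d' u'.
Proof.
move=> [hy [hd hu]] [hy' [hd' hu']] /in_coset_borel [g [hg eA]] /in_coset_borel [g' [hg' eA']].
have [_ hB _ b11] := borel_upper hd hu hg; have [_ hB' _ _] := borel_upper hd' hu' hg'.
have [-> eB] := Yset_eq_of_phi2_coset hy hy' hB hB' b11 (etrans (esym eA) eA').
by have [-> ->] := borel_decomp_uniq hd hu hg hd' hu' hg' eB.
Qed.

Lemma cidx_uniq10 {y1 y2 d u y1' y2' d' u' A} :
  cidx_valid Rc Ra (Ix10 y1 y2 d u) -> cidx_valid Rc Ra (Ix10 y1' y2' d' u') ->
  in_coset (cidx_lead (Ix10 y1 y2 d u)) A -> in_coset (cidx_lead (Ix10 y1' y2' d' u')) A ->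
  Ix10 y1 y2 d u = Ix10 y1' y2' d' u'.
Proof.
move=> [hy1 [hy2 [hn2 [hd hu]]]] [hy1' [hy2' [hn2' [hd' hu']]]].
move=> /in_coset_borel [g [hg eA]] /in_coset_borel [g' [hg' eA']].
have [_ [b10 b20 _] b00 _] := borel_upper hd hu hg.
have [_ [b10' b20' _] b00' _] := borel_upper hd' hu' hg'.
have [ey1 ey2] : y1 = y1' /\ y2 = y2'.
  apply: (lead10_col0_inj hy1 hy2 hy1' hy2' hn2 hn2' b00 b00') => i.
  by rewrite -(col0_mul_upper b10 b20) -(col0_mul_upper b10' b20') -eA -eA'.
subst y1' y2'.
have hG := unitmx_det1 (SL_o_lead10 hy1 hy2).2.
have eB := can_inj (mulKmx hG) (etrans (esym eA) eA').
by have [-> ->] := borel_decomp_uniq hd hu hg hd' hu' hg' eB.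
Qed.

Lemma cidx_uniq11 {y1 y2 y3 d u y1' y2' y3' d' u' A} :
  cidx_valid Rc Ra (Ix11 y1 y2 y3 d u) -> cidx_valid Rc Ra (Ix11 y1' y2' y3' d' u') ->
  in_coset (cidx_lead (Ix11 y1 y2 y3 d u)) A -> in_coset (cidx_lead (Ix11 y1' y2' y3' d' u')) A ->
  Ix11 y1 y2 y3 d u = Ix11 y1' y2' y3' d' u'.
Proof.
move=> [hy1 [hy2 [hy3 [hn2 [_ [hd hu]]]]]] [hy1' [hy2' [hy3' [hn2' [_ [hd' hu']]]]]].
move=> /in_coset_borel [g [hg eA]] /in_coset_borel [g' [hg' eA']].
rewrite -mulmxA -/(lead10 y1 y2) in eA; rewrite -mulmxA -/(lead10 y1' y2') in eA'.
have [_ hB b00 b11] := borel_upper hd hu hg; have [_ hB' b00' _] := borel_upper hd' hu' hg'.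
have col0 y B : upper3 B -> [/\ (phi2 y *m B) o3_1 o3_0 = 0, (phi2 y *m B) o3_2 o3_0 = 0
                               & (phi2 y *m B) o3_0 o3_0 = B o3_0 o3_0].
  by move=> [h10 h20 _]; rewrite phi2_row0 phi2_row1 phi2_row2 h10 h20 !mulr0 addr0.
have [c10 c20 c00] := col0 (invmx y3) _ hB; have [c10' c20' c00'] := col0 (invmx y3') _ hB'.
have [ey1 ey2] : y1 = y1' /\ y2 = y2'.
  apply: (lead10_col0_inj hy1 hy2 hy1' hy2' hn2 hn2' b00 b00') => i.
  by rewrite -c00 -c00' -(col0_mul_upper c10 c20) -(col0_mul_upper c10' c20') -eA -eA'.
subst y1' y2'.
have hG := unitmx_det1 (SL_o_lead10 hy1 hy2).2.
have := can_inj (mulKmx hG) (etrans (esym eA) eA').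
move=> /(Yset_eq_of_phi2_coset hy3 hy3' hB hB' b11) [-> eB].
by have [-> ->] := borel_decomp_uniq hd hu hg hd' hu' hg' eB.
Qed.

Lemma cidx_uniq {k l A} : cidx_valid Rc Ra k -> cidx_valid Rc Ra l ->
  in_coset (cidx_lead k) A -> in_coset (cidx_lead l) A -> k = l.
Proof.
move=> hk hl ck cl; have Dk := cidx_coset_Delta hk ck; have Dl := cidx_coset_Delta hl cl.
case: k hk ck Dk => [y d u|y1 y2 d u|y1 y2 y3 d u] hk ck Dk;
case: l hl cl Dl => [y' d' u'|y1' y2' d' u'|y1' y2' y3' d' u'] hl cl Dl /=.
all: first [ exact: cidx_uniq2 hk hl ck cl | exact: cidx_uniq10 hk hl ck cl
           | exact: cidx_uniq11 hk hl ck cl | exfalso ].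
- exact: Delta2_Delta10_disj (conj Dk Dl).
- exact: Delta2_Delta11_disj (conj Dk Dl).
- exact: Delta2_Delta10_disj (conj Dl Dk).
- exact: Delta10_Delta11_disj (conj Dk Dl).
- exact: Delta2_Delta11_disj (conj Dl Dk).
- exact: Delta10_Delta11_disj (conj Dl Dk).
Qed.

End Representatives.

Theorem corollary2p17 (Rc : algC -> Prop) (Ra : algC -> algC -> Prop)
  (hRc : reps_units Rc)
  (hRa : forall c, Eis c -> c <> 0 -> reps_mod c (Ra c)) :
  (* SL_3(o) is the disjoint union of Delta_2, Delta_{1,0}, Delta_{1,1} *)
  (forall A : 'M[algC]_3, SL_o A <-> Delta2 A \/ Delta10 A \/ Delta11 A) /\
  (forall A : 'M[algC]_3, ~ (Delta2 A /\ Delta10 A)) /\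
  (forall A : 'M[algC]_3, ~ (Delta2 A /\ Delta11 A)) /\
  (forall A : 'M[algC]_3, ~ (Delta10 A /\ Delta11 A)) /\
  (* Delta_2 as union of cosets *)
  (forall A : 'M[algC]_3, Delta2 A <->
     exists y d u, cidx_valid Rc Ra (Ix2 y d u) /\
                   in_coset (cidx_lead (Ix2 y d u)) A) /\
  (* Delta_{1,0} as union of cosets *)
  (forall A : 'M[algC]_3, Delta10 A <->
     exists y1 y2 d u, cidx_valid Rc Ra (Ix10 y1 y2 d u) /\
                       in_coset (cidx_lead (Ix10 y1 y2 d u)) A) /\
  (* Delta_{1,1} as union of cosets *)
  (forall A : 'M[algC]_3, Delta11 A <->
     exists y1 y2 y3 d u, cidx_valid Rc Ra (Ix11 y1 y2 y3 d u) /\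
                          in_coset (cidx_lead (Ix11 y1 y2 y3 d u)) A) /\
  (* all the cosets on the right-hand sides are pairwise disjoint *)
  (forall k l : cidx, cidx_valid Rc Ra k -> cidx_valid Rc Ra l -> k <> l ->
     forall A : 'M[algC]_3,
       ~ (in_coset (cidx_lead k) A /\ in_coset (cidx_lead l) A)).
Proof.
split; first exact: SL_o_Delta.
split; first exact: Delta2_Delta10_disj.
split; first exact: Delta2_Delta11_disj.
split; first exact: Delta10_Delta11_disj.
have in_Delta k A := @cidx_coset_Delta Rc Ra hRc k A.
split.
  move=> A; split; first exact: Delta2_cosets.
  by case=> y [d [u [hk ck]]]; apply: in_Delta ck.
split.
  move=> A; split; first exact: Delta10_cosets.
  by case=> y1 [y2 [d [u [hk ck]]]]; apply: in_Delta ck.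
split.
  move=> A; split; first exact: Delta11_cosets.
  by case=> y1 [y2 [y3 [d [u [hk ck]]]]]; apply: in_Delta ck.
by move=> k l hk hl hkl A [ck cl]; exact: hkl (cidx_uniq hRc hRa hk hl ck cl).
Qed.
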